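(* Let $P,Q$ be partial semigroups and $f:P\to Q$ a partial homomorphism. If $Q$ is IP-regular and the subset $f^{-1}[E(Q)]$ of $P$ is IP-regular, then $P$ is IP-regular.
   Context: A partial semigroup is a set with a partially defined multiplication such that $(ab)c=a(bc)$ whenever both sides are defined; any subset inherits a partial semigroup structure by restricting the operation. $E(P)$ is the set of idempotents ($aa$ defined and equal to $a$). A partial homomorphism $f:P\to Q$ is a map such that whenever $ab$ is defined in $P$, $f(a)f(b)$ is defined in $Q$ and $f(ab)=f(a)f(b)$. For a sequence $\vec{x}$ all of whose finite ordered products $\prod_{i\in a}x_i$ ($a$ finite nonempty subset of $\omega$, increasing order) are defined, $\mathrm{FP}(\vec{x})$ is the set of these products and $\mathrm{FP}_1(\vec{x})=\mathrm{FP}((x_{n+1})_n)$; an IP-set is a set containing such an $\mathrm{FP}(\vec{x})$. $P$ is strongly IP-regular if for every such sequence $\vec{x}$ in $P$, $x_0\mathrm{FP}_1(\vec{x})$ is not an IP-set; $P$ is IP-regular if $P\setminus E(P)$ is a union of finitely many strongly IP-regular subsets. *)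

From mathcomp Require Import all_boot.
Set Implicit Arguments. Unset Strict Implicit. Unset Printing Implicit Defensive.

Section PSG.
Variable T : Type.
(* A partial binary operation: [mul a b = Some c] means "ab is defined and equals c". *)
Variable mul : T -> T -> option T.

Definition psg_assoc : Prop :=
  forall a b c ab bc abc abc',
    mul a b = Some ab -> mul ab c = Some abc ->
    mul b c = Some bc -> mul a bc = Some abc' -> abc = abc'.

Definition opD (D : T -> Prop) (a b c : T) : Prop :=
  D a /\ D b /\ D c /\ mul a b = Some c.

Definition idem (D : T -> Prop) (a : T) : Prop := opD D a a a.

Fixpoint prod_from (D : T -> Prop) (x : nat -> T) (acc : T) (s : seq nat) (z : T)
  : Prop :=
  match s with
  | [::] => acc = z
  | j :: s' => exists c, opD D acc (x j) c /\ prod_from D x c s' z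
  end.

(* [prodD D x s z] : s is the increasing enumeration of a finite nonempty
   subset a of omega, and the ordered product prod_{i in a} x_i is defined
   in D and equals z. *)
Definition prodD (D : T -> Prop) (x : nat -> T) (s : seq nat) (z : T) : Prop :=
  match s with
  | [::] => False
  | i :: s' => D (x i) /\ prod_from D x (x i) s' z
  end.

Definition fin_index (s : seq nat) : Prop := sorted ltn s /\ s <> [::].

Definition FP_defined (D : T -> Prop) (x : nat -> T) : Prop :=
  forall s, fin_index s -> exists z, prodD D x s z.

Definition FP (D : T -> Prop) (x : nat -> T) (z : T) : Prop :=
  exists s, fin_index s /\ prodD D x s z.

Definition FP1 (D : T -> Prop) (x : nat -> T) : T -> Prop :=
  FP D (fun n => x n.+1).

Definition x0FP1 (D : T -> Prop) (x : nat -> T) (z : T) : Prop :=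
  exists y, FP1 D x y /\ opD D (x 0) y z.

Definition IPset (D : T -> Prop) (A : T -> Prop) : Prop :=
  exists y, FP_defined D y /\ (forall z, FP D y z -> A z).

Definition strongly_IP_regular (D : T -> Prop) : Prop :=
  forall x, FP_defined D x -> ~ IPset D (x0FP1 D x).

Definition IP_regular (D : T -> Prop) : Prop :=
  exists (n : nat) (S : nat -> T -> Prop),
    (forall i, i < n -> strongly_IP_regular (S i)) /\
    (forall a, (D a /\ ~ idem D a) <-> (exists2 i, i < n & S i a)).

End PSG.

Definition partial_hom (P Q : Type) (mulP : P -> P -> option P)
  (mulQ : Q -> Q -> option Q) (f : P -> Q) : Prop :=
  forall a b c, mulP a b = Some c -> mulQ (f a) (f b) = Some (f c).

Definition whole (T : Type) : T -> Prop := fun _ => True.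

From mathcomp Require Import all_boot.
From Stdlib Require Import Classical.
Set Implicit Arguments.
Unset Strict Implicit.

(* Write E := f^{-1}[E(Q)].  An element a of P that is not
   idempotent either has f a idempotent, in which case a lies in E \ E(E)
   (idempotency in E would be idempotency in P), or f a is not idempotent,
   in which case a lies in f^{-1}[Q \ E(Q)].  Conversely no element of either
   set is idempotent in P, since a partial homomorphism maps idempotents to
   idempotents.  So P \ E(P) = (E \ E(E)) u f^{-1}[Q \ E(Q)].
   The first set is a finite union of strongly IP-regular sets by hypothesis;
   the second is the union of the preimages f^{-1}[T_j] of the strongly
   IP-regular pieces T_j of Q \ E(Q), and the preimage of a strongly
   IP-regular set is strongly IP-regular: f maps ordered products to ordered
   products, products in Q are uniquely determined, so a witness
   x_0 FP_1(x) >= FP(y) in the preimage is pushed forward to a witness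
   f(x_0) FP_1(f x) >= FP(f y) in T_j.  Concatenating the two finite families
   gives the required decomposition of P \ E(P). *)

Section ProductsFunctional.
Variables (T : Type) (mul : T -> T -> option T) (D : T -> Prop).

Lemma prod_from_functional x s : forall acc z z',
  prod_from mul D x acc s z -> prod_from mul D x acc s z' -> z = z'.
Proof.
elim: s => [|j s IH] acc z z' /=; first by move=> <- <-.
move=> [c [[_ [_ [_ Hc]]] Hz]] [c' [[_ [_ [_ Hc']]] Hz']].
move: Hc'; rewrite Hc => -[Ec]; subst c'; exact: IH Hz Hz'.
Qed.

Lemma prodD_functional x s z z' : prodD mul D x s z -> prodD mul D x s z' -> z = z'.
Proof. by case: s => [|i s] //= [_ Hz] [_ Hz']; exact: prod_from_functional Hz Hz'. Qed.

End ProductsFunctional.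

Section Pushforward.
Variables (P Q : Type) (mulP : P -> P -> option P) (mulQ : Q -> Q -> option Q)
  (f : P -> Q) (D : Q -> Prop).
Hypothesis hom_f : partial_hom mulP mulQ f.

Let preD (a : P) : Prop := D (f a).

Lemma opD_pushforward a b c : opD mulP preD a b c -> opD mulQ D (f a) (f b) (f c).
Proof. by move=> [Da [Db [Dc Habc]]]; do 3 (split => //); exact: hom_f. Qed.

Lemma prod_from_pushforward x s : forall acc z, prod_from mulP preD x acc s z ->
  prod_from mulQ D (fun n => f (x n)) (f acc) s (f z).
Proof.
elim: s => [|j s IH] acc z /=; first by move=> ->.
by move=> [c [Hc Hz]]; exists (f c); split; [exact: opD_pushforward | exact: IH].
Qed.

Lemma prodD_pushforward x s z :
  prodD mulP preD x s z -> prodD mulQ D (fun n => f (x n)) s (f z).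
Proof. by case: s => [|i s] //= [Dx Hz]; split => //; exact: prod_from_pushforward. Qed.

Lemma FP_defined_pushforward x :
  FP_defined mulP preD x -> FP_defined mulQ D (fun n => f (x n)).
Proof. by move=> Hx s hs; have [z Hz] := Hx s hs; exists (f z); exact: prodD_pushforward. Qed.

Lemma strongly_IP_regular_preimage :
  strongly_IP_regular mulQ D -> strongly_IP_regular mulP preD.
Proof.
move=> sregD x Hx [y [Hy y_in]].
apply: (sregD (fun n => f (x n))); first exact: FP_defined_pushforward.
exists (fun n => f (y n)); split; first exact: FP_defined_pushforward.
move=> z' [s [hs Hz']].
have [z Hz] := Hy s hs.
have -> := prodD_functional Hz' (prodD_pushforward Hz).
have [w [[s' [hs' Hw]] Hop]] := y_in z (ex_intro _ s (conj hs Hz)).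
exists (f w); split; last exact: opD_pushforward.
by exists s'; split => //; exact: prodD_pushforward Hw.
Qed.

End Pushforward.

Definition finite_cover (T : Type) (n : nat) (S : nat -> T -> Prop) (A : T -> Prop) :=
  forall a, A a <-> exists2 i, i < n & S i a.

Definition cat_family (T : Type) (n : nat) (S S' : nat -> T -> Prop) (k : nat) :=
  if k < n then S k else S' (k - n).

Lemma finite_cover_cat (T : Type) n m (S S' : nat -> T -> Prop) (A B : T -> Prop) :
  finite_cover n S A -> finite_cover m S' B ->
  finite_cover (n + m) (cat_family n S S') (fun a => A a \/ B a).
Proof.
rewrite /cat_family => covA covB a; split.
- case=> [/covA [i lt_in Si] | /covB [j lt_jm S'j]].
    by exists i; rewrite ?lt_in // ltn_addr.
  by exists (n + j); rewrite ?ltn_add2l // ltnNge leq_addr /= addKn.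
- move=> [k lt_k]; case: ifP => lt_kn Sk; first by left; apply/covA; exists k.
  by right; apply/covB; exists (k - n); rewrite // ltn_subLR // leqNgt lt_kn.
Qed.

Lemma cat_family_strongly_IP_regular (T : Type) (mul : T -> T -> option T)
  n m (S S' : nat -> T -> Prop) :
  (forall i, i < n -> strongly_IP_regular mul (S i)) ->
  (forall j, j < m -> strongly_IP_regular mul (S' j)) ->
  forall k, k < n + m -> strongly_IP_regular mul (cat_family n S S' k).
Proof.
rewrite /cat_family => sregS sregS' k lt_k; case: ifP => lt_kn; first exact: sregS.
by apply: sregS'; rewrite ltn_subLR // leqNgt lt_kn.
Qed.

Lemma nonidempotent_split (P Q : Type) (mulP : P -> P -> option P)
  (mulQ : Q -> Q -> option Q) (f : P -> Q) (a : P) :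
  partial_hom mulP mulQ f ->
  let E := fun b => idem mulQ (@whole Q) (f b) in
  (whole a /\ ~ idem mulP (@whole P) a) <->
  ((E a /\ ~ idem mulP E a) \/ (whole (f a) /\ ~ idem mulQ (@whole Q) (f a))).
Proof.
move=> hom_f E; split.
- move=> [_ not_idem_a]; case: (classic (E a)) => [Ea | not_Ea]; [left | by right].
  by split=> // [[_ [_ [_ Haa]]]]; apply: not_idem_a; do 3 (split => //).
- case=> [[Ea not_idemE_a] | [_ not_idem_fa]]; split=> // [[_ [_ [_ Haa]]]].
    by apply: not_idemE_a; do 3 (split => //).
  by apply: not_idem_fa; do 3 (split => //); exact: hom_f.
Qed.

Theorem mainTheorem5 (P Q : Type) (mulP : P -> P -> option P)
  (mulQ : Q -> Q -> option Q) (f : P -> Q) :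
  psg_assoc mulP -> psg_assoc mulQ ->
  partial_hom mulP mulQ f ->
  IP_regular mulQ (@whole Q) ->
  IP_regular mulP (fun a => idem mulQ (@whole Q) (f a)) ->
  IP_regular mulP (@whole P).
Proof.
move=> _ _ hom_f [m [T [sregT covT]]] [n [S [sregS covS]]].
pose T' j := fun a => T j (f a).
have sregT' j : j < m -> strongly_IP_regular mulP (T' j).
  by move=> lt_jm; apply: (strongly_IP_regular_preimage hom_f); exact: sregT.
exists (n + m), (cat_family n S T'); split.
  exact: cat_family_strongly_IP_regular.
have covT' : finite_cover m T' (fun a => whole (f a) /\ ~ idem mulQ (@whole Q) (f a)).
  by move=> a; exact: covT.
move=> a; rewrite (nonidempotent_split a hom_f).
exact: finite_cover_cat covS covT' a.
Qed.
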